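(* Let $S=(\Lambda,L)$ be a quantum Hamiltonian system on $X$ and $S'=(\Lambda',L')$ a quantum Hamiltonian system on $X'$, with embeddings $\pi:\mathcal{O}(\Lambda)\to\mathcal{O}(X')$ and $\pi':\mathcal{O}(\Lambda')\to\mathcal{O}(X)$, and suppose $S$ and $S'$ are bispectrally dual via the anti-isomorphism $b:B\to B'$. Let $f\in\mathcal{O}(\Lambda)$ and $g\in\mathcal{O}(\Lambda')$, and for $i\in\mathbb{N}$ define $$A_i=\mathrm{ad}_{L_f}^i(g)\in\mathcal{D}(X),\qquad A_i'=(-1)^i\,\mathrm{ad}_f^i(L'_g)\in\mathcal{D}(X'),$$ where $\mathrm{ad}_P(Q)=PQ-QP$, $g$ stands for $\pi'(g)$ viewed as a multiplication operator on $X$, and $f$ stands for $\pi(f)$ viewed as a multiplication operator on $X'$. Then $b(A_i)=A_i'$ for all $i\in\mathbb{N}$, and in particular $A_i=0$ for all $i>\operatorname{ord} L'_g$.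
   Context: All varieties are over an algebraically closed field $\mathbb{F}$ of characteristic zero; $\mathcal{D}(X)$ denotes the ring of differential operators on $X$ and $\mathcal{O}(X)$ its coordinate ring. A quantum Hamiltonian system (QHS) on a smooth irreducible affine variety $X$ is a pair $S=(\Lambda,L)$ where $\Lambda$ is an affine variety over $\mathbb{F}$ and $L:\mathcal{O}(\Lambda)\to\mathcal{D}(X)$, $h\mapsto L_h$, is an embedding of rings. For QHSs $S=(\Lambda,L)$ on $X$ and $S'=(\Lambda',L')$ on $X'$, suppose $X'$ covers $\Lambda$ and $X$ covers $\Lambda'$, giving natural embeddings $\pi:\mathcal{O}(\Lambda)\to\mathcal{O}(X')$ and $\pi':\mathcal{O}(\Lambda')\to\mathcal{O}(X)$; functions act on varieties as multiplication operators, so $\mathcal{O}(X)\subset\mathcal{D}(X)$. Let $B\subset\mathcal{D}(X)$ be the subring generated by the images of $L$ and $\pi'$, and $B'\subset\mathcal{D}(X')$ the subring generated by the images of $L'$ and $\pi$. $S$ and $S'$ are called bispectrally dual if there is a map $b:B\to B'$ with $b(L_h)=\pi(h)$ for all $h\in\mathcal{O}(\Lambda)$, $b(\pi'(k))=L'_k$ for all $k\in\mathcal{O}(\Lambda')$, $b(P_1P_2)=b(P_2)b(P_1)$ and $b(P_1+P_2)=b(P_1)+b(P_2)$ for all $P_1,P_2\in B$, and $b(P)=0$ iff $P=0$. *)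

From HB Require Import structures.
From mathcomp Require Import all_boot all_order all_algebra.
Set Implicit Arguments. Unset Strict Implicit. Unset Printing Implicit Defensive.
Import GRing.Theory.
Local Open Scope ring_scope.

Definition ad {R : pzRingType} (P Q : R) : R := P * Q - Q * P.

Inductive gen_subring {R : pzRingType} (S : R -> Prop) : R -> Prop :=
| gs_base x : S x -> gen_subring S x
| gs_one : gen_subring S 1
| gs_sub x y : gen_subring S x -> gen_subring S y -> gen_subring S (x - y)
| gs_mul x y : gen_subring S x -> gen_subring S y -> gen_subring S (x * y).

Definition Bring {OL OL' : comNzRingType} {D : nzRingType}
  (L : OL -> D) (pi' : OL' -> D) : D -> Prop :=
  gen_subring (fun x => (exists h, x = L h) \/ (exists k, x = pi' k)).

Definition bispectral_dual {OL OL' : comNzRingType} {D D' : nzRingType}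
  (L : OL -> D) (pi : OL -> D') (pi' : OL' -> D) (L' : OL' -> D')
  (b : D -> D') : Prop :=
  [/\ forall P, Bring L pi' P -> Bring pi L' (b P),
      forall h, b (L h) = pi h,
      forall k, b (pi' k) = L' k,
      forall P1 P2, Bring L pi' P1 -> Bring L pi' P2 ->
        b (P1 * P2) = b P2 * b P1 /\ b (P1 + P2) = b P1 + b P2
    & forall P, Bring L pi' P -> (b P = 0 <-> P = 0)].

(* Grothendieck order filtration: P has order <= n (relative to the
   function ring O, a commutative subring of D) iff
   ad_{a_0} ... ad_{a_n} P = 0 for all a_0,...,a_n in O. *)
Definition ord_le {D : pzRingType} (O : D -> Prop) (n : nat) (P : D) : Prop :=
  forall a : seq D, size a = n.+1 -> (forall x, x \in a -> O x) ->
    foldr ad P a = 0.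

(* O is a commutative subring of D (the functions inside D(X)). *)
Definition function_subring {D : pzRingType} (O : D -> Prop) : Prop :=
  [/\ O 1, forall x y, O x -> O y -> O (x - y),
      forall x y, O x -> O y -> O (x * y)
    & forall x y, O x -> O y -> x * y = y * x].

From HB Require Import structures.
From mathcomp Require Import all_boot all_order all_algebra.

Set Implicit Arguments.
Unset Strict Implicit.
Unset Printing Implicit Defensive.
Import GRing.Theory.
Local Open Scope ring_scope.

(* An additive anti-homomorphism b turns a commutator into the opposite
   commutator of the images: b (ad P Q) = ad (b Q) (b P) = - ad (b P) (b Q).
   Iterating, b sends ad_{L f}^i (g) to (-1)^i ad_{f}^i (L'_g).  Since f is a
   function on X', the Grothendieck order bound on L'_g kills the right-hand
   side for i > ord L'_g, and injectivity of b on B transfers this to A_i. *)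

Lemma ad_signr {R : pzRingType} (P Q : R) k :
  ad P ((-1) ^+ k * Q) = (-1) ^+ k * ad P Q.
Proof. by rewrite /ad mulrBr !mulrA (commr_sign P k). Qed.

Lemma iter_ad0 {R : pzRingType} (P : R) i : iter i (ad P) 0 = 0.
Proof. by elim: i => //= i ->; rewrite /ad mulr0 mul0r subr0. Qed.

Lemma foldr_ad_nseq {R : pzRingType} (P Q : R) i :
  foldr ad Q (nseq i P) = iter i (ad P) Q.
Proof. by elim: i => //= i ->. Qed.

Lemma ord_le_iter_ad {R : pzRingType} (O : R -> Prop) n (a P : R) i :
  ord_le O n P -> O a -> (n < i)%N -> iter i (ad a) P = 0.
Proof.
move=> ordP Oa lt_ni.
rewrite -(subnKC lt_ni) addnC iterD -(foldr_ad_nseq a P n.+1).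
rewrite ordP ?size_nseq ?iter_ad0 // => x /nseqP[-> _].
exact: Oa.
Qed.

Section GeneratedSubring.

Variables (R : pzRingType) (G : R -> Prop).
Local Notation B := (gen_subring G).

Lemma gen_subring0 : B 0.
Proof. by rewrite -(subrr 1); apply: gs_sub; apply: gs_one. Qed.

Lemma gen_subringN x : B x -> B (- x).
Proof. by move=> Bx; rewrite -sub0r; apply: gs_sub => //; apply: gen_subring0. Qed.

Lemma gen_subring_iter_ad P Q i : B P -> B Q -> B (iter i (ad P) Q).
Proof.
by move=> BP BQ; elim: i => //= i BQi; apply: gs_sub; apply: gs_mul.
Qed.

End GeneratedSubring.

Section AntiMorphism.

Variables (R S : pzRingType) (G : R -> Prop) (b : R -> S).
Local Notation B := (gen_subring G).

Hypothesis bD : forall x y, B x -> B y -> b (x + y) = b x + b y.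
Hypothesis bM : forall x y, B x -> B y -> b (x * y) = b y * b x.

Lemma antimorph0 : b 0 = 0.
Proof.
have B0 : B 0 := gen_subring0 G.
by apply: (addrI (b 0)); rewrite -bD // !addr0.
Qed.

Lemma antimorphN x : B x -> b (- x) = - b x.
Proof.
move=> Bx; apply: (addrI (b x)).
by rewrite -bD ?subrr ?antimorph0 //; apply: gen_subringN.
Qed.

Lemma antimorphB x y : B x -> B y -> b (x - y) = b x - b y.
Proof. by move=> Bx By; rewrite bD ?antimorphN //; apply: gen_subringN. Qed.

Lemma antimorph_ad P Q : B P -> B Q -> b (ad P Q) = - ad (b P) (b Q).
Proof. by move=> BP BQ; rewrite antimorphB ?bM ?opprB //; apply: gs_mul. Qed.

Lemma antimorph_iter_ad P Q i : B P -> B Q ->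
  b (iter i (ad P) Q) = (-1) ^+ i * iter i (ad (b P)) (b Q).
Proof.
move=> BP BQ; elim: i => [|i IH] /=; first by rewrite mul1r.
rewrite antimorph_ad //; last exact: gen_subring_iter_ad.
by rewrite IH ad_signr exprS mulN1r mulNr.
Qed.

End AntiMorphism.

Theorem mainTheorem1
  (OL OL' : comNzRingType) (DX DX' : nzRingType)
  (OX : DX -> Prop) (OX' : DX' -> Prop)
  (L : {rmorphism OL -> DX}) (L' : {rmorphism OL' -> DX'})
  (pi : {rmorphism OL -> DX'}) (pi' : {rmorphism OL' -> DX})
  (b : DX -> DX')
  (hOX : function_subring OX) (hOX' : function_subring OX')
  (injL : injective L) (injL' : injective L')
  (injpi : injective pi) (injpi' : injective pi')
  (pi_in : forall h, OX' (pi h)) (pi'_in : forall k, OX (pi' k))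
  (dual : bispectral_dual L pi pi' L' b)
  (f : OL) (g : OL') :
  (forall i : nat,
     b (iter i (ad (L f)) (pi' g)) = (-1) ^+ i * iter i (ad (pi f)) (L' g)) /\
  (forall n : nat, ord_le OX' n (L' g) ->
     forall i : nat, (n < i)%N -> iter i (ad (L f)) (pi' g) = 0).
Proof.
case: dual => _ bL bpi' bMD b_eq0.
have BLf : Bring L pi' (L f) by apply: gs_base; left; exists f.
have Bpi'g : Bring L pi' (pi' g) by apply: gs_base; right; exists g.
have bD x y : Bring L pi' x -> Bring L pi' y -> b (x + y) = b x + b y.
  by move=> Bx By; have [] := bMD x y Bx By.
have bM x y : Bring L pi' x -> Bring L pi' y -> b (x * y) = b y * b x.
  by move=> Bx By; have [] := bMD x y Bx By.
have bA i : b (iter i (ad (L f)) (pi' g)) = (-1) ^+ i * iter i (ad (pi f)) (L' g).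
  by rewrite (antimorph_iter_ad bD bM) ?bL ?bpi'.
split=> // n ordg i lt_ni.
apply/b_eq0; first exact: gen_subring_iter_ad.
by rewrite bA (ord_le_iter_ad _ (pi_in f) lt_ni) // mulr0.
Qed.
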